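(* For $0<\rho\le1$ and $\varphi\in[0,2\pi]$ let $A(\rho,\varphi)=D_\rho T_\varphi D_\rho^{-1}=\begin{pmatrix}\cos\varphi&-\rho^{-1}\sin\varphi\\ \rho\sin\varphi&\cos\varphi\end{pmatrix}$ and let $\theta_1(\varphi,\rho):=\theta_1^{\sup,\varlimsup}$ be the first outer angular value of the autonomous discrete system $u_{n+1}=A(\rho,\varphi)u_n$ in $\mathbb R^2$. Then $(\varphi,\rho)\mapsto\theta_1(\varphi,\rho)$ is upper semicontinuous on $[0,2\pi]\times(0,1]$.
   Context: $D_\rho=\mathrm{diag}(1,\rho)$, $T_\varphi=\begin{pmatrix}\cos\varphi&-\sin\varphi\\ \sin\varphi&\cos\varphi\end{pmatrix}$. For a sequence of invertible matrices $A_n$ (here $A_n\equiv A(\rho,\varphi)$), $\Phi(n,0)=A_{n-1}\cdots A_0$, $\Phi(0,0)=I$. For nonzero $x,y\in\mathbb R^2$ (identified with lines), $\angle(x,y)\in[0,\pi/2]$ is the angle between $\mathrm{span}(x)$ and $\mathrm{span}(y)$, i.e. $\cos\angle(x,y)=|x^\top y|/(\|x\|\|y\|)$. The first outer angular value is $\theta_1^{\sup,\varlimsup}=\sup_{v\ne0}\varlimsup_{n\to\infty}\frac1n\sum_{j=1}^n\angle(\Phi(j-1,0)v,\Phi(j,0)v)$. It is known that for this system this value coincides with the three other angular values ($\sup$ over $v$ outside or inside, $\varlimsup$ or $\varliminf$). *)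

From Stdlib Require Import Reals.
From Coquelicot Require Import Coquelicot.
Open Scope R_scope.

Definition vec := (R * R)%type.
Definition dot (x y : vec) : R := fst x * fst y + snd x * snd y.
Definition vnorm (x : vec) : R := sqrt (dot x x).

Definition Dmat (rho : R) (x : vec) : vec := (fst x, rho * snd x).
Definition Dinv (rho : R) (x : vec) : vec := (fst x, snd x / rho).
Definition Tmat (phi : R) (x : vec) : vec :=
  (cos phi * fst x - sin phi * snd x, sin phi * fst x + cos phi * snd x).

Definition Amat (rho phi : R) (x : vec) : vec := Dmat rho (Tmat phi (Dinv rho x)).

Fixpoint Phi (rho phi : R) (n : nat) (v : vec) : vec :=
  match n with
  | O => v
  | S k => Amat rho phi (Phi rho phi k v)
  end.

(* angle in [0, pi/2] between the lines spanned by nonzero x, y *)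
Definition angle (x y : vec) : R :=
  acos (Rabs (dot x y) / (vnorm x * vnorm y)).

(* (1/n) sum_{j=1}^n angle(Phi(j-1,0)v, Phi(j,0)v), at index n = m+1 *)
Definition avg_angle (rho phi : R) (v : vec) (m : nat) : R :=
  sum_f_R0 (fun k => angle (Phi rho phi k v) (Phi rho phi (S k) v)) m / INR (S m).

Definition theta1 (phi rho : R) : Rbar :=
  Rbar_lub (fun t => exists v : vec, v <> (0, 0) /\
                     t = LimSup_seq (avg_angle rho phi v)).

Definition dom (phi rho : R) : Prop := 0 <= phi <= 2 * PI /\ 0 < rho <= 1.

Definition usc_on (P : R -> R -> Prop) (f : R -> R -> Rbar) : Prop :=
  forall a0 b0, P a0 b0 ->
  forall r : R, Rbar_lt (f a0 b0) r ->
  exists delta : R, 0 < delta /\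
    forall a b, P a b -> Rabs (a - a0) < delta -> Rabs (b - b0) < delta ->
    Rbar_lt (f a b) r.

From Stdlib Require Import Reals Lra Lia Psatz ZArith.
From Coquelicot Require Import Coquelicot.
Open Scope R_scope.

(** Conjugacy gives Phi(k,0) v = D_rho T_(k phi) D_rho^(-1) v, so the angle sum over a
    block of N steps depends on (rho, phi) and on the direction of w = D_rho^(-1) v only
    through finitely many continuous quantities ([block_sum]).  The proof compares two
    statements about a parameter (phi, rho):
    - "block bound": every unit w has block sum at most N*B over the first N steps;
      by concatenating blocks along the orbit, this forces theta_1(phi, rho) <= B
      ([theta1_le_of_block_bound]);
    - if theta_1(phi0, rho0) < r, then all limsups are <= s < r, and a finite grid on
      the unit circle together with uniform continuity turns these pointwise bounds into
      a block bound at (phi0, rho0) with B slightly above s ([block_bound_of_limsup]).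
    A block bound only involves N steps, hence persists under small perturbations of the
    parameters ([block_bound_perturb]); combining the three gives upper semicontinuity. *)

Definition l1dist (x y : vec) : R := Rabs (fst x - fst y) + Rabs (snd x - snd y).

Definition scale (l : R) (x : vec) : vec := (l * fst x, l * snd x).
Definition unit (x : vec) : vec := scale (/ vnorm x) x.

Definition cos_angle (x y : vec) : R := Rabs (dot x y) / (vnorm x * vnorm y).

Lemma vnorm_nonneg x : 0 <= vnorm x.
Proof. apply sqrt_pos. Qed.

Lemma vnorm_sq x : vnorm x * vnorm x = fst x * fst x + snd x * snd x.
Proof. unfold vnorm, dot. apply sqrt_sqrt. nra. Qed.

Lemma abs_fst_le_vnorm x : Rabs (fst x) <= vnorm x.
Proof.
  unfold vnorm, dot. rewrite <- sqrt_Rsqr_abs. apply sqrt_le_1_alt. unfold Rsqr. nra.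
Qed.

Lemma abs_snd_le_vnorm x : Rabs (snd x) <= vnorm x.
Proof.
  unfold vnorm, dot. rewrite <- sqrt_Rsqr_abs. apply sqrt_le_1_alt. unfold Rsqr. nra.
Qed.

Lemma vnorm_l1_lipschitz x x' : 0 < vnorm x -> Rabs (vnorm x - vnorm x') <= l1dist x x'.
Proof.
  intros Hx. pose proof (vnorm_nonneg x').
  pose proof (vnorm_sq x). pose proof (vnorm_sq x').
  assert (E : vnorm x - vnorm x' =
     ((fst x - fst x') * (fst x + fst x') + (snd x - snd x') * (snd x + snd x'))
       / (vnorm x + vnorm x')) by (field_simplify_eq; [nra | lra]).
  rewrite E, Rabs_div, (Rabs_pos_eq (vnorm x + vnorm x')) by lra.
  apply Rle_div_l; [lra|]. unfold l1dist.
  eapply Rle_trans; [apply Rabs_triang|]. rewrite !Rabs_mult.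
  pose proof (abs_fst_le_vnorm x). pose proof (abs_snd_le_vnorm x).
  pose proof (abs_fst_le_vnorm x'). pose proof (abs_snd_le_vnorm x').
  pose proof (Rabs_triang (fst x) (fst x')). pose proof (Rabs_triang (snd x) (snd x')).
  pose proof (Rabs_pos (fst x - fst x')). pose proof (Rabs_pos (snd x - snd x')).
  nra.
Qed.

Lemma vnorm_eq0 w : vnorm w = 0 -> w = (0, 0).
Proof.
  unfold vnorm, dot. intros Hw. apply sqrt_eq_0 in Hw; [|nra].
  destruct w as [w1 w2]; simpl in *. f_equal; nra.
Qed.

Lemma vnorm_origin : vnorm (0, 0) = 0.
Proof. unfold vnorm, dot; simpl. rewrite Rmult_0_l, Rplus_0_l. apply sqrt_0. Qed.

Lemma vnorm_pos w : w <> (0, 0) -> 0 < vnorm w.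
Proof.
  intros Hw. destruct (vnorm_nonneg w) as [|E]; auto.
  exfalso. apply Hw, vnorm_eq0. auto.
Qed.

Lemma vnorm_scale l x : 0 <= l -> vnorm (scale l x) = l * vnorm x.
Proof.
  intros Hl. unfold vnorm, dot, scale; simpl.
  replace (l * fst x * (l * fst x) + l * snd x * (l * snd x))
    with ((l * l) * (fst x * fst x + snd x * snd x)) by ring.
  rewrite sqrt_mult_alt by nra. rewrite sqrt_square by lra. reflexivity.
Qed.

Lemma vnorm_unit w : w <> (0, 0) -> vnorm (unit w) = 1.
Proof.
  intros Hw. pose proof (vnorm_pos w Hw). unfold unit.
  rewrite vnorm_scale by (left; apply Rinv_0_lt_compat; auto). field. lra.
Qed.

Lemma angle_scale l x y : 0 < l -> angle (scale l x) (scale l y) = angle x y.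
Proof.
  intros Hl. unfold angle. f_equal.
  rewrite !vnorm_scale by lra. unfold dot, scale; simpl.
  replace (l * fst x * (l * fst y) + l * snd x * (l * snd y))
    with ((l * l) * (fst x * fst y + snd x * snd y)) by ring.
  rewrite Rabs_mult, (Rabs_pos_eq (l * l)) by nra.
  unfold Rdiv. replace (l * vnorm x * (l * vnorm y)) with ((l * l) * (vnorm x * vnorm y)) by ring.
  rewrite Rinv_mult.
  transitivity (Rabs (fst x * fst y + snd x * snd y) * / (vnorm x * vnorm y) * ((l * l) * / (l * l)));
    [ring|].
  rewrite Rinv_r by nra. ring.
Qed.

Lemma ratio_lipschitz a a' n n' m : 0 < m -> m <= n -> m <= n' -> Rabs a' <= n' ->
  Rabs (a / n - a' / n') <= (Rabs (a - a') + Rabs (n - n')) / m.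
Proof.
  intros Hm Hn Hn' Ha.
  assert (E : a / n - a' / n' = ((a - a') * n' + a' * (n' - n)) / (n * n')) by (field; lra).
  rewrite E, Rabs_div, (Rabs_pos_eq (n * n')) by nra.
  assert (Num : Rabs ((a - a') * n' + a' * (n' - n)) <= n' * (Rabs (a - a') + Rabs (n - n'))).
  { eapply Rle_trans; [apply Rabs_triang|]. rewrite !Rabs_mult.
    rewrite (Rabs_pos_eq n'), (Rabs_minus_sym n' n) by lra.
    pose proof (Rabs_pos (n - n')). nra. }
  pose proof (Rabs_pos (a - a')). pose proof (Rabs_pos (n - n')).
  assert (Hnm : 1 <= n / m) by (apply Rle_div_r; lra).
  apply Rle_div_l; [nra|].
  replace ((Rabs (a - a') + Rabs (n - n')) / m * (n * n'))
    with ((Rabs (a - a') + Rabs (n - n')) * n' * (n / m)) by (field; lra).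
  assert (0 <= (Rabs (a - a') + Rabs (n - n')) * n') by (apply Rmult_le_pos; lra).
  nra.
Qed.

Lemma unit_l1dist m x x' : 0 < m -> m <= vnorm x -> m <= vnorm x' ->
  l1dist (unit x) (unit x') <= 3 * l1dist x x' / m.
Proof.
  intros Hm Hx Hx'.
  assert (Hn : Rabs (vnorm x - vnorm x') <= l1dist x x') by (apply vnorm_l1_lipschitz; lra).
  assert (E : forall c : R, / vnorm x * c = c / vnorm x) by (intros; unfold Rdiv; ring).
  assert (E' : forall c : R, / vnorm x' * c = c / vnorm x') by (intros; unfold Rdiv; ring).
  unfold l1dist, unit, scale; simpl. rewrite !E, !E'.
  pose proof (ratio_lipschitz (fst x) (fst x') _ _ m Hm Hx Hx' (abs_fst_le_vnorm x')).
  pose proof (ratio_lipschitz (snd x) (snd x') _ _ m Hm Hx Hx' (abs_snd_le_vnorm x')).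
  unfold l1dist in Hn. unfold Rdiv in *. pose proof (Rinv_0_lt_compat m Hm). nra.
Qed.

Lemma dot_l1_lipschitz u v u' v' : vnorm v <= 1 -> vnorm u' <= 1 ->
  Rabs (dot u v - dot u' v') <= l1dist u u' + l1dist v v'.
Proof.
  intros Hv Hu. unfold dot, l1dist.
  replace (fst u * fst v + snd u * snd v - (fst u' * fst v' + snd u' * snd v'))
    with ((fst u - fst u') * fst v + (snd u - snd u') * snd v
          + (fst u' * (fst v - fst v') + snd u' * (snd v - snd v'))) by ring.
  pose proof (abs_fst_le_vnorm v). pose proof (abs_snd_le_vnorm v).
  pose proof (abs_fst_le_vnorm u'). pose proof (abs_snd_le_vnorm u').
  eapply Rle_trans; [apply Rabs_triang|].
  eapply Rle_trans; [apply Rplus_le_compat; apply Rabs_triang|].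
  rewrite !Rabs_mult.
  pose proof (Rabs_pos (fst u - fst u')). pose proof (Rabs_pos (snd u - snd u')).
  pose proof (Rabs_pos (fst v - fst v')). pose proof (Rabs_pos (snd v - snd v')).
  nra.
Qed.

Lemma cos_angle_unit x y : 0 < vnorm x -> 0 < vnorm y ->
  cos_angle x y = Rabs (dot (unit x) (unit y)).
Proof.
  intros Hx Hy. unfold cos_angle.
  replace (dot (unit x) (unit y)) with (dot x y / (vnorm x * vnorm y))
    by (unfold unit, scale, dot; simpl; field; lra).
  rewrite Rabs_div, (Rabs_pos_eq (vnorm x * vnorm y)) by nra. reflexivity.
Qed.

Lemma cos_angle_lipschitz m x y x' y' : 0 < m ->
  m <= vnorm x -> m <= vnorm y -> m <= vnorm x' -> m <= vnorm y' ->
  Rabs (cos_angle x y - cos_angle x' y') <= 3 * (l1dist x x' + l1dist y y') / m.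
Proof.
  intros Hm Hx Hy Hx' Hy'.
  rewrite !cos_angle_unit by lra.
  eapply Rle_trans; [apply Rabs_triang_inv2|].
  eapply Rle_trans; [apply dot_l1_lipschitz; right; apply vnorm_unit|].
  - intro E. rewrite E in Hy. unfold vnorm, dot in Hy. simpl in Hy.
    rewrite Rmult_0_l, Rplus_0_l, sqrt_0 in Hy. lra.
  - intro E. rewrite E in Hx'. unfold vnorm, dot in Hx'. simpl in Hx'.
    rewrite Rmult_0_l, Rplus_0_l, sqrt_0 in Hx'. lra.
  - pose proof (unit_l1dist m x x' Hm Hx Hx'). pose proof (unit_l1dist m y y' Hm Hy Hy').
    unfold Rdiv in *. lra.
Qed.

Lemma abs_sin_le t : Rabs (sin t) <= Rabs t.
Proof.
  pose proof PI2_1. pose proof (SIN_bound t).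
  destruct (Rtotal_order t 0) as [Hn|[->|Hp]].
  - pose proof (sin_lt_x (- t) ltac:(lra)) as Hs. rewrite sin_neg in Hs.
    rewrite (Rabs_left t) by lra. apply Rabs_le.
    destruct (Rle_lt_dec t (-1)); [lra|].
    assert (0 <= sin (- t)) by (apply sin_ge_0; lra). rewrite sin_neg in *. lra.
  - rewrite sin_0, Rabs_R0. lra.
  - pose proof (sin_lt_x t Hp).
    rewrite (Rabs_right t) by lra. apply Rabs_le.
    destruct (Rle_lt_dec 1 t); [lra|].
    assert (0 <= sin t) by (apply sin_ge_0; lra). lra.
Qed.

Lemma abs_half t : Rabs (t / 2) = Rabs t / 2.
Proof. unfold Rdiv. rewrite Rabs_mult, (Rabs_pos_eq (/ 2)) by lra. reflexivity. Qed.

Lemma cos_lipschitz a b : Rabs (cos a - cos b) <= Rabs (a - b).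
Proof.
  rewrite form2, !Rabs_mult, (Rabs_left (-2)) by lra.
  pose proof (abs_sin_le ((a - b) / 2)).
  assert (Rabs (sin ((a + b) / 2)) <= 1) by (apply Rabs_le, SIN_bound).
  pose proof (Rabs_pos (sin ((a - b) / 2))). pose proof (Rabs_pos (sin ((a + b) / 2))).
  rewrite abs_half in *. nra.
Qed.

Lemma sin_lipschitz a b : Rabs (sin a - sin b) <= Rabs (a - b).
Proof.
  rewrite form4, !Rabs_mult, (Rabs_right 2) by lra.
  pose proof (abs_sin_le ((a - b) / 2)).
  assert (Rabs (cos ((a + b) / 2)) <= 1) by (apply Rabs_le, COS_bound).
  pose proof (Rabs_pos (sin ((a - b) / 2))). pose proof (Rabs_pos (cos ((a + b) / 2))).
  rewrite abs_half in *. nra.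
Qed.

(** [acos] is constant outside [-1, 1], so it factors through the clamp to [-1, 1]. *)
Definition clamp x := Rmax (-1) (Rmin 1 x).

Lemma acos_clamp x : acos x = acos (clamp x).
Proof. unfold clamp, Rmax, Rmin, acos. repeat destruct Rle_dec; try lra; reflexivity. Qed.

Lemma clamp_lipschitz x y : Rabs (clamp x - clamp y) <= Rabs (x - y).
Proof.
  unfold clamp, Rmax, Rmin. repeat destruct Rle_dec; unfold Rabs; repeat destruct Rcase_abs; lra.
Qed.

Lemma clamp_range x : -1 <= clamp x <= 1.
Proof. unfold clamp, Rmax, Rmin. repeat destruct Rle_dec; lra. Qed.

Lemma sin_ge_on c t : 0 < c -> c <= PI / 2 -> c <= t <= PI - c -> sin c <= sin t.
Proof.
  intros Hc Hc2 Ht.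
  destruct (Rle_lt_dec t (PI / 2)).
  - destruct (Req_dec c t) as [->|Hne]; [lra|].
    left. apply sin_increasing_1; lra.
  - rewrite <- (sin_PI_x t).
    destruct (Req_dec c (PI - t)) as [->|Hne]; [lra|].
    left. apply sin_increasing_1; lra.
Qed.

Lemma acos_gap e x y : 0 < e <= 1 -> -1 <= x <= 1 -> -1 <= y <= 1 ->
  acos x + e <= acos y -> 2 * (sin (e / 2) * sin (e / 2)) <= x - y.
Proof.
  intros He Hx Hy Hab.
  pose proof (acos_bound x). pose proof (acos_bound y). pose proof PI2_1.
  replace (x - y) with (cos (acos x) - cos (acos y)) by (rewrite !cos_acos; auto).
  set (a := acos x) in *. set (b := acos y) in *.
  rewrite form2.
  replace ((a - b) / 2) with (- ((b - a) / 2)) by field. rewrite sin_neg.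
  assert (S1 : sin (e / 2) <= sin ((b - a) / 2)) by (apply sin_ge_on; lra).
  assert (S2 : sin (e / 2) <= sin ((a + b) / 2)) by (apply sin_ge_on; lra).
  assert (P : 0 < sin (e / 2)) by (apply sin_gt_0; lra).
  nra.
Qed.

Lemma acos_unif_cont eps : 0 < eps -> exists delta, 0 < delta /\
  forall x y, Rabs (x - y) < delta -> Rabs (acos x - acos y) < eps.
Proof.
  intros He. set (e := Rmin eps 1).
  assert (He1 : 0 < e <= 1) by (unfold e, Rmin; destruct Rle_dec; lra).
  assert (He2 : e <= eps) by apply Rmin_l.
  exists (2 * (sin (e / 2) * sin (e / 2))). split.
  { assert (0 < sin (e / 2)) by (apply sin_gt_0; pose proof PI2_1; lra). nra. }
  intros x y Hxy.
  rewrite (acos_clamp x), (acos_clamp y).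
  pose proof (clamp_lipschitz x y). pose proof (clamp_range x) as Rx. pose proof (clamp_range y) as Ry.
  destruct (Rlt_le_dec (Rabs (acos (clamp x) - acos (clamp y))) e) as [|Hge]; [lra|].
  exfalso.
  assert (Hc : Rabs (clamp x - clamp y) < 2 * (sin (e / 2) * sin (e / 2))) by lra.
  apply Rabs_def2 in Hc.
  revert Hge. unfold Rabs at 1; destruct Rcase_abs; intro Hge.
  - pose proof (acos_gap e (clamp x) (clamp y) He1 Rx Ry ltac:(lra)). lra.
  - pose proof (acos_gap e (clamp y) (clamp x) He1 Ry Rx ltac:(lra)). lra.
Qed.

Lemma Tmat_vnorm a w : vnorm (Tmat a w) = vnorm w.
Proof.
  unfold vnorm, dot, Tmat; simpl. f_equal.
  pose proof (sin2_cos2 a) as E. unfold Rsqr in E.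
  transitivity ((sin a * sin a + cos a * cos a) * (fst w * fst w + snd w * snd w)); [ring|].
  rewrite E. ring.
Qed.

Lemma Dmat_vnorm_ge rho p : 0 <= rho <= 1 -> rho * vnorm p <= vnorm (Dmat rho p).
Proof.
  intros Hr. unfold vnorm, dot, Dmat; simpl.
  rewrite <- (sqrt_square rho) at 1 by lra.
  rewrite <- sqrt_mult_alt by nra.
  apply sqrt_le_1_alt.
  assert (0 <= fst p * fst p) by nra. assert (0 <= snd p * snd p) by nra.
  assert (rho * rho <= 1) by nra. nra.
Qed.

Lemma abs_comb4 c1 c2 d1 d2 x1 x2 y1 y2 L :
  Rabs c1 <= 1 -> Rabs c2 <= 1 -> Rabs d1 <= L -> Rabs d2 <= L ->
  Rabs (c1 * x1 + c2 * x2 + (d1 * y1 + d2 * y2)) <= Rabs x1 + Rabs x2 + L * (Rabs y1 + Rabs y2).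
Proof.
  intros H1 H2 H3 H4.
  eapply Rle_trans; [apply Rabs_triang|].
  eapply Rle_trans; [apply Rplus_le_compat; apply Rabs_triang|].
  rewrite !Rabs_mult.
  pose proof (Rabs_pos x1). pose proof (Rabs_pos x2).
  pose proof (Rabs_pos y1). pose proof (Rabs_pos y2). nra.
Qed.

Lemma Tmat_l1dist a a' w w' :
  l1dist (Tmat a w) (Tmat a' w') <= 2 * l1dist w w' + 4 * Rabs (a - a') * vnorm w'.
Proof.
  destruct w as [w1 w2], w' as [v1 v2]. unfold l1dist, Tmat; simpl.
  assert (Hc : Rabs (cos a) <= 1) by (apply Rabs_le, COS_bound).
  assert (Hs : Rabs (sin a) <= 1) by (apply Rabs_le, SIN_bound).
  assert (Hms : Rabs (- sin a) <= 1) by (rewrite Rabs_Ropp; exact Hs).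
  pose proof (cos_lipschitz a a') as Lc. pose proof (sin_lipschitz a a') as Ls.
  assert (Lms : Rabs (- (sin a - sin a')) <= Rabs (a - a')) by (rewrite Rabs_Ropp; exact Ls).
  replace (cos a * w1 - sin a * w2 - (cos a' * v1 - sin a' * v2)) with
    (cos a * (w1 - v1) + (- sin a) * (w2 - v2) + ((cos a - cos a') * v1 + (- (sin a - sin a')) * v2))
    by ring.
  replace (sin a * w1 + cos a * w2 - (sin a' * v1 + cos a' * v2)) with
    (sin a * (w1 - v1) + cos a * (w2 - v2) + ((sin a - sin a') * v1 + (cos a - cos a') * v2))
    by ring.
  pose proof (abs_comb4 _ _ _ _ (w1 - v1) (w2 - v2) v1 v2 _ Hc Hms Lc Lms).
  pose proof (abs_comb4 _ _ _ _ (w1 - v1) (w2 - v2) v1 v2 _ Hs Hc Ls Lc).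
  pose proof (abs_fst_le_vnorm (v1, v2)). pose proof (abs_snd_le_vnorm (v1, v2)).
  simpl in *. pose proof (Rabs_pos (a - a')). nra.
Qed.

Lemma Dmat_l1dist rho rho' p p' : 0 <= rho <= 1 ->
  l1dist (Dmat rho p) (Dmat rho' p') <= l1dist p p' + Rabs (rho - rho') * vnorm p'.
Proof.
  intros Hr. unfold l1dist, Dmat; simpl.
  replace (rho * snd p - rho' * snd p') with (rho * (snd p - snd p') + (rho - rho') * snd p')
    by ring.
  pose proof (Rabs_triang (rho * (snd p - snd p')) ((rho - rho') * snd p')).
  rewrite !Rabs_mult, (Rabs_pos_eq rho) in * by lra.
  pose proof (Rabs_pos (snd p - snd p')). pose proof (Rabs_pos (rho - rho')).
  pose proof (abs_snd_le_vnorm p'). nra.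
Qed.

Lemma conj_point_l1dist rho rho' a a' w w' : 0 <= rho <= 1 ->
  l1dist (Dmat rho (Tmat a w)) (Dmat rho' (Tmat a' w'))
    <= 2 * l1dist w w' + (4 * Rabs (a - a') + Rabs (rho - rho')) * vnorm w'.
Proof.
  intros Hr.
  pose proof (Dmat_l1dist rho rho' (Tmat a w) (Tmat a' w') Hr).
  pose proof (Tmat_l1dist a a' w w'). rewrite Tmat_vnorm in *. lra.
Qed.

(** The angle between the images of w under D_rho T_a and D_rho T_b; the orbit
    angles of the system are of this form (see [Phi_conj] below). *)
Definition conj_angle (rho a b : R) (w : vec) : R :=
  angle (Dmat rho (Tmat a w)) (Dmat rho (Tmat b w)).

Lemma conj_angle_scale rho a b l w : 0 < l -> conj_angle rho a b (scale l w) = conj_angle rho a b w.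
Proof.
  intros Hl. unfold conj_angle.
  replace (Dmat rho (Tmat a (scale l w))) with (scale l (Dmat rho (Tmat a w)))
    by (unfold scale, Dmat, Tmat; simpl; f_equal; ring).
  replace (Dmat rho (Tmat b (scale l w))) with (scale l (Dmat rho (Tmat b w)))
    by (unfold scale, Dmat, Tmat; simpl; f_equal; ring).
  apply angle_scale; auto.
Qed.

(** Uniform continuity of [conj_angle] for rho in [rho1, 1] and w in the annulus
    1/2 <= |w| <= 2: this is where compactness of the parameter set enters. *)
Lemma conj_angle_unif_cont rho1 eps : 0 < rho1 -> 0 < eps -> exists delta, 0 < delta /\
  forall rho rho' a a' b b' w w',
  rho1 <= rho <= 1 -> rho1 <= rho' <= 1 -> 1 / 2 <= vnorm w -> 1 / 2 <= vnorm w' <= 2 ->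
  Rabs (rho - rho') < delta -> Rabs (a - a') < delta -> Rabs (b - b') < delta ->
  l1dist w w' < delta ->
  Rabs (conj_angle rho a b w - conj_angle rho' a' b' w') < eps.
Proof.
  intros Hr He. destruct (acos_unif_cont eps He) as [da [Hda Ha]].
  set (d := da * rho1 / 200).
  assert (Hd : 0 < d) by (unfold d; nra).
  exists d. split; [exact Hd|].
  intros rho rho' a a' b b' w w' R1 R2 N1 N2 Dr Da Db Dw.
  apply Ha.
  set (m := rho1 / 2). assert (Hm : 0 < m) by (unfold m; lra).
  assert (Lower : forall r c u, rho1 <= r <= 1 -> 1 / 2 <= vnorm u -> m <= vnorm (Dmat r (Tmat c u))).
  { intros r c u Hr' Hu. pose proof (Dmat_vnorm_ge r (Tmat c u) ltac:(lra)).
    rewrite Tmat_vnorm in *. unfold m. nra. }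
  assert (Close : forall c c', Rabs (c - c') < d ->
     l1dist (Dmat rho (Tmat c w)) (Dmat rho' (Tmat c' w')) <= 12 * d).
  { intros c c' Hc. pose proof (conj_point_l1dist rho rho' c c' w w' ltac:(lra)).
    pose proof (Rabs_pos (c - c')). pose proof (Rabs_pos (rho - rho')). nra. }
  eapply Rle_lt_trans; [apply (cos_angle_lipschitz m); try apply Lower; lra|].
  pose proof (Close a a' Da). pose proof (Close b b' Db).
  apply Rlt_div_l; [lra|]. unfold m, d in *. nra.
Qed.

Fixpoint ssum (f : nat -> R) (n : nat) : R :=
  match n with O => 0 | S k => ssum f k + f k end.

Lemma ssum_le_shift f g e n :
  (forall k, (k < n)%nat -> f k <= g k + e) -> ssum f n <= ssum g n + INR n * e.
Proof.
  induction n; intros Hk; cbn [ssum]; [simpl; lra|].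
  pose proof (Hk n ltac:(lia)).
  assert (ssum f n <= ssum g n + INR n * e) by (apply IHn; intros; apply Hk; lia).
  rewrite S_INR. lra.
Qed.

Lemma ssum_ext f g n : (forall k, (k < n)%nat -> f k = g k) -> ssum f n = ssum g n.
Proof.
  induction n; intros Hk; cbn [ssum]; [reflexivity|].
  rewrite (Hk n ltac:(lia)), IHn; [reflexivity|]. intros; apply Hk; lia.
Qed.

Lemma sum_f_R0_ssum f m : sum_f_R0 f m = ssum f (S m).
Proof. induction m; simpl; [lra|]. simpl in IHm. rewrite IHm. reflexivity. Qed.

Lemma Dinv_Dmat rho w : rho <> 0 -> Dinv rho (Dmat rho w) = w.
Proof. intros. unfold Dinv, Dmat; destruct w; simpl; f_equal; field; auto. Qed.

Lemma Dmat_nonzero rho w : rho <> 0 -> w <> (0, 0) -> Dmat rho w <> (0, 0).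
Proof.
  intros Hr Hw E. apply Hw. rewrite <- (Dinv_Dmat rho w), E by auto.
  unfold Dinv; simpl; f_equal; field; auto.
Qed.

Lemma Dinv_nonzero rho v : rho <> 0 -> v <> (0, 0) -> Dinv rho v <> (0, 0).
Proof.
  intros Hr Hv E. apply Hv. destruct v as [v1 v2]. unfold Dinv in E; simpl in E.
  injection E; intros E2 E1. f_equal; auto.
  replace v2 with (v2 / rho * rho) by (field; auto). rewrite E2. ring.
Qed.

Lemma Tmat_nonzero a w : w <> (0, 0) -> Tmat a w <> (0, 0).
Proof.
  intros Hw E. apply Hw, vnorm_eq0. rewrite <- (Tmat_vnorm a), E.
  unfold vnorm, dot; simpl. rewrite Rmult_0_l, Rplus_0_l. apply sqrt_0.
Qed.

Lemma Phi_conj rho phi k v : rho <> 0 ->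
  Phi rho phi k v = Dmat rho (Tmat (INR k * phi) (Dinv rho v)).
Proof.
  intros Hr. induction k.
  - simpl. rewrite Rmult_0_l. unfold Dmat, Tmat, Dinv. rewrite cos_0, sin_0.
    destruct v; simpl; f_equal; field; auto.
  - simpl Phi. rewrite IHk, S_INR.
    replace ((INR k + 1) * phi) with (INR k * phi + phi) by ring.
    unfold Amat, Dmat, Tmat, Dinv. rewrite cos_plus, sin_plus.
    destruct v; simpl; f_equal; field; auto.
Qed.

Lemma Phi_add rho phi k n v : Phi rho phi (k + n) v = Phi rho phi k (Phi rho phi n v).
Proof. induction k; simpl; [reflexivity|]. rewrite IHk. reflexivity. Qed.

Lemma Phi_nonzero rho phi k v : rho <> 0 -> v <> (0, 0) -> Phi rho phi k v <> (0, 0).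
Proof.
  intros Hr Hv. rewrite Phi_conj by auto.
  apply Dmat_nonzero, Tmat_nonzero, Dinv_nonzero; auto.
Qed.

Definition angle_sum (rho phi : R) (v : vec) (n : nat) : R :=
  ssum (fun k => angle (Phi rho phi k v) (Phi rho phi (S k) v)) n.

Definition block_sum (rho phi : R) (w : vec) (n : nat) : R :=
  ssum (fun k => conj_angle rho (INR k * phi) (INR (S k) * phi) w) n.

Lemma angle_sum_block_sum rho phi v n : rho <> 0 ->
  angle_sum rho phi v n = block_sum rho phi (Dinv rho v) n.
Proof.
  intros Hr. apply ssum_ext. intros k _. rewrite !Phi_conj by auto. reflexivity.
Qed.

Lemma block_sum_scale rho phi l w n : 0 < l -> block_sum rho phi (scale l w) n = block_sum rho phi w n.
Proof. intros Hl. apply ssum_ext. intros k _. apply conj_angle_scale; auto. Qed.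

Lemma avg_angle_angle_sum rho phi v m :
  avg_angle rho phi v m = angle_sum rho phi v (S m) / INR (S m).
Proof. unfold avg_angle, angle_sum. rewrite sum_f_R0_ssum. reflexivity. Qed.

Lemma angle_sum_add rho phi v N n :
  angle_sum rho phi v (N + n) = angle_sum rho phi v n + angle_sum rho phi (Phi rho phi n v) N.
Proof.
  unfold angle_sum. induction N; cbn [ssum Nat.add]; [ring|].
  rewrite IHN, <- !Phi_add. replace (S (N + n)) with (S N + n)%nat by lia. ring.
Qed.

Lemma angle_sum_le_pi rho phi v n : angle_sum rho phi v n <= INR n * PI.
Proof.
  unfold angle_sum. replace (INR n * PI) with (ssum (fun _ => 0) n + INR n * PI).
  - apply ssum_le_shift. intros k _. unfold angle. pose proof (acos_bound
      (Rabs (dot (Phi rho phi k v) (Phi rho phi (S k) v)) /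
       (vnorm (Phi rho phi k v) * vnorm (Phi rho phi (S k) v)))). lra.
  - assert (ssum (fun _ => 0) n = 0) by (induction n; simpl; lra). lra.
Qed.

Lemma angle_sum_linear_bound rho phi N B : rho <> 0 -> (1 <= N)%nat ->
  (forall u, u <> (0, 0) -> angle_sum rho phi u N <= INR N * B) ->
  forall n v, v <> (0, 0) -> angle_sum rho phi v n <= INR n * B + INR N * (PI + Rabs B).
Proof.
  intros Hr HN Hb n.
  induction n as [n IH] using (well_founded_induction Wf_nat.lt_wf).
  intros v Hv. pose proof (pos_INR N). pose proof PI_RGT_0. pose proof (Rabs_pos B).
  destruct (Nat.lt_ge_cases n N) as [Hl|Hg].
  - pose proof (angle_sum_le_pi rho phi v n).
    assert (INR n <= INR N) by (apply le_INR; lia).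
    pose proof (pos_INR n). pose proof (Rle_abs (- B)). rewrite Rabs_Ropp in *. nra.
  - replace n with (N + (n - N))%nat by lia.
    rewrite angle_sum_add, plus_INR.
    pose proof (IH (n - N)%nat ltac:(lia) v Hv).
    pose proof (Hb (Phi rho phi (n - N) v) (Phi_nonzero _ _ _ _ Hr Hv)). nra.
Qed.

Lemma LimSup_le_of_bound (u : nat -> R) (B C : R) :
  (forall m, u m <= B + C / INR (S m)) -> Rbar_le (LimSup_seq u) B.
Proof.
  intros Hu.
  assert (Hinv : is_lim_seq (fun m => / INR (S m)) 0).
  { apply (is_lim_seq_inv _ p_infty); [|discriminate].
    apply (is_lim_seq_incr_1 INR p_infty), is_lim_seq_INR. }
  assert (Hlim : is_lim_seq (fun m => B + C / INR (S m)) B).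
  { replace (Finite B) with (Rbar_plus B (Rbar_mult C 0)) by (simpl; f_equal; ring).
    apply is_lim_seq_plus'; [apply is_lim_seq_const|].
    apply (is_lim_seq_scal_l _ C 0 Hinv). }
  rewrite <- (is_LimSup_seq_unique _ _ (is_lim_LimSup_seq _ _ Hlim)).
  apply LimSup_le. exists O. intros n _. apply Hu.
Qed.

Lemma eventually_lt_of_LimSup_le (u : nat -> R) (s e : R) :
  Rbar_le (LimSup_seq u) s -> 0 < e -> eventually (fun n => u n < s + e).
Proof.
  intros Hs He. unfold LimSup_seq in Hs. destruct (ex_LimSup_seq u) as [l Hl]; simpl in Hs.
  destruct l as [l| |]; simpl in Hl, Hs.
  - destruct (Hl (mkposreal _ He)) as [_ [N HN]]. exists N. intros n Hn.
    pose proof (HN n Hn). simpl in *. lra.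
  - contradiction.
  - apply Hl.
Qed.

Definition block_bound (rho phi : R) (N : nat) (B : R) : Prop :=
  forall w, vnorm w = 1 -> block_sum rho phi w N <= INR N * B.

Lemma angle_sum_le_of_block_bound rho phi N B : rho <> 0 -> block_bound rho phi N B ->
  forall u, u <> (0, 0) -> angle_sum rho phi u N <= INR N * B.
Proof.
  intros Hr Hb u Hu. rewrite angle_sum_block_sum by auto.
  assert (Hw : Dinv rho u <> (0, 0)) by (apply Dinv_nonzero; auto).
  pose proof (vnorm_pos _ Hw) as Hpos.
  rewrite <- (block_sum_scale rho phi (/ vnorm (Dinv rho u))) by (apply Rinv_0_lt_compat; auto).
  apply Hb, vnorm_unit, Hw.
Qed.

Lemma theta1_le_of_block_bound phi rho N B : rho <> 0 -> (1 <= N)%nat ->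
  block_bound rho phi N B -> Rbar_le (theta1 phi rho) B.
Proof.
  intros Hr HN Hb.
  pose proof (angle_sum_linear_bound rho phi N B Hr HN
                (angle_sum_le_of_block_bound rho phi N B Hr Hb)) as Hlin.
  set (C := INR N * (PI + Rabs B)) in Hlin.
  unfold theta1, Rbar_lub. destruct (Rbar_ex_lub _) as [l [Hub Hlub]]. simpl. clear Hub.
  apply Hlub. intros x [v [Hv Ex]]. rewrite Ex.
  apply (LimSup_le_of_bound _ B C). intros m. rewrite avg_angle_angle_sum.
  pose proof (Hlin (S m) v Hv). pose proof (lt_0_INR (S m) ltac:(lia)).
  apply Rle_div_l; [lra|].
  replace ((B + C / INR (S m)) * INR (S m)) with (INR (S m) * B + C) by (field; lra). lra.
Qed.

Lemma theta1_lt_witness phi rho (r : R) : Rbar_lt (theta1 phi rho) r -> exists s, s < r /\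
  forall v, v <> (0, 0) -> Rbar_le (LimSup_seq (avg_angle rho phi v)) s.
Proof.
  unfold theta1, Rbar_lub. destruct (Rbar_ex_lub _) as [l [Hub Hlub]]. simpl. clear Hlub. intro Hr.
  destruct l as [l| |].
  - exists l. split; [exact Hr|]. intros v Hv. apply Hub. exists v. auto.
  - contradiction.
  - exists (r - 1). split; [lra|]. intros v Hv.
    pose proof (Hub (LimSup_seq (avg_angle rho phi v)) (ex_intro _ v (conj Hv eq_refl))).
    destruct (LimSup_seq (avg_angle rho phi v)); simpl in *; tauto.
Qed.

Lemma block_sum_eventually_le rho phi (s : R) e w : rho <> 0 ->
  (forall v, v <> (0, 0) -> Rbar_le (LimSup_seq (avg_angle rho phi v)) s) -> 0 < e ->
  0 < vnorm w -> eventually (fun n => block_sum rho phi w n <= INR n * (s + e)).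
Proof.
  intros Hr Hs He Hw.
  assert (Hw0 : w <> (0, 0)) by (intro E; rewrite E, vnorm_origin in Hw; lra).
  destruct (eventually_lt_of_LimSup_le _ s e (Hs _ (Dmat_nonzero rho w Hr Hw0)) He) as [N HN].
  exists (S N). intros [|m] Hm; [lia|].
  pose proof (HN m ltac:(lia)) as Hlt.
  rewrite avg_angle_angle_sum, angle_sum_block_sum, Dinv_Dmat in Hlt by auto.
  pose proof (lt_0_INR (S m) ltac:(lia)).
  apply Rlt_div_l in Hlt; lra.
Qed.

Lemma block_sum_unif_cont rho1 eps : 0 < rho1 -> 0 < eps -> exists delta, 0 < delta /\
  forall N rho rho' phi phi' w w',
  rho1 <= rho <= 1 -> rho1 <= rho' <= 1 -> 1 / 2 <= vnorm w -> 1 / 2 <= vnorm w' <= 2 ->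
  Rabs (rho - rho') < delta -> INR N * Rabs (phi - phi') < delta -> l1dist w w' < delta ->
  block_sum rho phi w N <= block_sum rho' phi' w' N + INR N * eps.
Proof.
  intros Hr He. destruct (conj_angle_unif_cont rho1 eps Hr He) as [d [Hd Hcont]].
  exists d. split; [exact Hd|].
  intros N rho rho' phi phi' w w' R1 R2 N1 N2 Dr Dphi Dw.
  assert (Dk : forall j, (j <= N)%nat -> Rabs (INR j * phi - INR j * phi') < d).
  { intros j Hj. rewrite <- Rmult_minus_distr_l, Rabs_mult, Rabs_pos_eq by apply pos_INR.
    pose proof (le_INR _ _ Hj). pose proof (Rabs_pos (phi - phi')). nra. }
  apply ssum_le_shift. intros k Hk.
  assert (Hq : Rabs (conj_angle rho (INR k * phi) (INR (S k) * phi) w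
                     - conj_angle rho' (INR k * phi') (INR (S k) * phi') w') < eps)
    by (apply Hcont; auto; apply Dk; lia).
  apply Rabs_def2 in Hq. lra.
Qed.

Lemma grid_approx K t : (1 <= K)%nat -> -1 <= t <= 1 ->
  exists i, (i <= 2 * K)%nat /\ Rabs (t - (INR i / INR K - 1)) <= / INR K.
Proof.
  intros HK Ht.
  assert (HKp : 0 < INR K) by (apply lt_0_INR; lia).
  set (x := INR K * (t + 1)).
  assert (Hx : 0 <= x <= 2 * INR K) by (unfold x; nra).
  destruct (archimed x) as [A1 A2].
  assert (Hz : (1 <= up x)%Z) by (assert (0 < up x)%Z by (apply lt_0_IZR; lra); lia).
  exists (Z.to_nat (up x - 1)).
  assert (E : INR (Z.to_nat (up x - 1)) = IZR (up x) - 1)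
    by (rewrite INR_IZR_INZ, Z2Nat.id, minus_IZR by lia; reflexivity).
  split.
  - apply INR_le. rewrite E, mult_INR. simpl (INR 2). lra.
  - rewrite E.
    replace (t - ((IZR (up x) - 1) / INR K - 1)) with ((x - (IZR (up x) - 1)) / INR K)
      by (unfold x; field; lra).
    rewrite Rabs_div, (Rabs_pos_eq (INR K)) by lra.
    apply Rle_div_l; [lra|]. rewrite Rinv_l by lra.
    apply Rabs_le. lra.
Qed.

Definition grid (K i j : nat) : vec := (INR i / INR K - 1, INR j / INR K - 1).

Lemma grid_near_unit K w : (1 <= K)%nat -> vnorm w = 1 ->
  exists i j, (i <= 2 * K)%nat /\ (j <= 2 * K)%nat /\ l1dist w (grid K i j) <= 2 / INR K.
Proof.
  intros HK Hw.
  destruct (grid_approx K (fst w) HK) as [i [Hi Hgi]];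
    [apply Rabs_le_between; rewrite <- Hw; apply abs_fst_le_vnorm|].
  destruct (grid_approx K (snd w) HK) as [j [Hj Hgj]];
    [apply Rabs_le_between; rewrite <- Hw; apply abs_snd_le_vnorm|].
  exists i, j. repeat split; auto. unfold l1dist, grid; simpl. lra.
Qed.

Lemma eventually_forall_le (P : nat -> nat -> Prop) M :
  (forall i, (i <= M)%nat -> eventually (P i)) ->
  eventually (fun n => forall i, (i <= M)%nat -> P i n).
Proof.
  induction M as [|M IH]; intros HP.
  - destruct (HP O (le_n O)) as [N HN]. exists N. intros n Hn i Hi.
    replace i with O by lia. auto.
  - eapply filter_imp; [|apply filter_and;
      [apply IH; intros i Hi; apply HP; lia | apply (HP (S M)); lia]].
    intros n [H1 H2] i Hi. destruct (Nat.le_gt_cases i M); [auto|].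
    replace i with (S M) by lia. exact H2.
Qed.

(** Compactness of the unit circle: the pointwise eventual bounds at a fixed parameter
    become a uniform block bound, via a finite grid and [block_sum_unif_cont]. *)
Lemma block_bound_of_limsup rho0 phi0 (s : R) eps : 0 < rho0 <= 1 ->
  (forall v, v <> (0, 0) -> Rbar_le (LimSup_seq (avg_angle rho0 phi0 v)) s) -> 0 < eps ->
  exists N, (1 <= N)%nat /\ block_bound rho0 phi0 N (s + eps).
Proof.
  intros Hr Hs He. set (e := eps / 2). assert (He2 : 0 < e) by (unfold e; lra).
  destruct (block_sum_unif_cont rho0 e ltac:(lra) He2) as [d [Hd Hcont]].
  destruct (INR_unbounded (Rmax 4 (2 / d))) as [K HK].
  pose proof (Rmax_l 4 (2 / d)). pose proof (Rmax_r 4 (2 / d)).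
  assert (HK1 : (1 <= K)%nat) by (destruct K; [simpl in HK; lra | lia]).
  assert (HKd : 2 / INR K < d).
  { assert (Hlt : 2 / d < INR K) by lra. apply Rlt_div_l in Hlt; [|lra].
    apply Rlt_div_l; lra. }
  assert (HK4 : 2 / INR K <= 1 / 2) by (apply Rle_div_l; lra).
  assert (Hev : eventually (fun n => forall i, (i <= 2 * K)%nat -> forall j, (j <= 2 * K)%nat ->
     1 / 2 <= vnorm (grid K i j) -> block_sum rho0 phi0 (grid K i j) n <= INR n * (s + e))).
  { apply eventually_forall_le. intros i _. apply eventually_forall_le. intros j _.
    destruct (Rle_lt_dec (1 / 2) (vnorm (grid K i j))) as [Hg|Hg].
    - destruct (block_sum_eventually_le rho0 phi0 s e (grid K i j) ltac:(lra) Hs He2 ltac:(lra))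
        as [N HN].
      exists N. intros n Hn _. auto.
    - apply filter_forall. intros n Hg'. lra. }
  destruct Hev as [N0 HN0].
  exists (S N0). split; [lia|]. intros w Hw1.
  destruct (grid_near_unit K w HK1 Hw1) as [i [j [Hi [Hj Hdist]]]].
  pose proof (vnorm_l1_lipschitz w (grid K i j) ltac:(lra)) as Hn.
  apply Rabs_le_between in Hn.
  pose proof (HN0 (S N0) ltac:(lia) i Hi j Hj ltac:(lra)).
  assert (block_sum rho0 phi0 w (S N0)
            <= block_sum rho0 phi0 (grid K i j) (S N0) + INR (S N0) * e).
  { apply Hcont; rewrite ?Rminus_diag, ?Rabs_R0, ?Rmult_0_r; lra. }
  pose proof (pos_INR (S N0)). unfold e in *. nra.
Qed.

(** Openness in the parameters: a block bound survives small perturbations of (phi, rho),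
    since only the first N iterates are involved. *)
Lemma block_bound_perturb rho0 phi0 N B eps : 0 < rho0 <= 1 -> 0 < eps ->
  block_bound rho0 phi0 N B -> exists delta, 0 < delta /\
  forall phi rho, 0 < rho <= 1 -> Rabs (phi - phi0) < delta -> Rabs (rho - rho0) < delta ->
  block_bound rho phi N (B + eps).
Proof.
  intros Hr He Hb.
  destruct (block_sum_unif_cont (rho0 / 2) eps ltac:(lra) He) as [d [Hd Hcont]].
  pose proof (lt_0_INR (S N) ltac:(lia)) as HSN.
  assert (HSN1 : 1 <= INR (S N)) by (apply (le_INR 1); lia).
  set (delta := Rmin (d / INR (S N)) (rho0 / 2)).
  assert (Hd1 : delta <= d / INR (S N)) by apply Rmin_l.
  assert (Hd2 : delta <= rho0 / 2) by apply Rmin_r.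
  assert (Hdd : d / INR (S N) <= d) by (apply Rle_div_l; nra).
  exists delta. split; [apply Rmin_pos; [apply Rdiv_lt_0_compat|]; lra|].
  intros phi rho Hrho Dphi Drho w Hw.
  assert (Hphi : INR N * Rabs (phi - phi0) < d).
  { pose proof (Rabs_pos (phi - phi0)). pose proof (S_INR N).
    apply Rle_lt_trans with (INR (S N) * Rabs (phi - phi0)); [nra|].
    apply Rlt_le_trans with (INR (S N) * (d / INR (S N))); [apply Rmult_lt_compat_l; lra|].
    right. field. lra. }
  assert (Hl1 : l1dist w w = 0) by (unfold l1dist; rewrite !Rminus_diag, Rabs_R0; ring).
  apply Rabs_def2 in Drho.
  pose proof (Hcont N rho rho0 phi phi0 w w) as Hc.
  pose proof (Hb w Hw). pose proof (pos_INR N).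
  assert (block_sum rho phi w N <= block_sum rho0 phi0 w N + INR N * eps).
  { apply Hc; try lra. apply Rabs_def1; lra. }
  nra.
Qed.

Theorem mainTheorem16 : usc_on dom theta1.
Proof.
  intros phi0 rho0 [_ Hrho0] r Hr.
  destruct (theta1_lt_witness phi0 rho0 r Hr) as [s [Hsr Hs]].
  set (eps := (r - s) / 3).
  assert (Heps : 0 < eps) by (unfold eps; lra).
  destruct (block_bound_of_limsup rho0 phi0 s eps Hrho0 Hs Heps) as [N [HN Hb0]].
  destruct (block_bound_perturb rho0 phi0 N (s + eps) eps Hrho0 Heps Hb0)
    as [delta [Hdelta Hb]].
  exists delta. split; [exact Hdelta|].
  intros phi rho [_ Hrho] Hphi Hdrho.
  apply Rbar_le_lt_trans with (s + eps + eps).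
  - apply (theta1_le_of_block_bound phi rho N); [lra | exact HN | apply Hb; auto].
  - simpl. unfold eps. lra.
Qed.
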